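(* In the $(3,2,2)$ scenario, every deterministically consistent correlation satisfies $p_{\rm gynin}\le \tfrac58$, and the bound is attained by the deterministic correlation $x_1=(1\oplus a_2)a_3$, $x_2=(1\oplus a_3)a_1$, $x_3=(1\oplus a_1)a_2$, which is deterministically consistent.
   Context: $(3,2,2)$ scenario: three parties, $a_k,x_k\in\{0,1\}$, $\bar a=1\oplus a$. For a correlation $p(\vec x|\vec a)$ define $p_{\rm gynin}=\frac18\sum_{\vec a\in\{0,1\}^3}\big[p((a_3,a_1,a_2)|\vec a)+p((\bar a_3,\bar a_1,\bar a_2)|\vec a)\big]$. For finite sets $I_k,O_k$, $p(\vec i|\vec o)$ is a classical process if for all finite setting/outcome sets and all local interventions $p(x_k,o_k|a_k,i_k)$, $\sum_{\vec i,\vec o}\prod_kp(x_k,o_k|a_k,i_k)p(\vec i|\vec o)$ is a valid conditional distribution over $\vec x$ for each $\vec a$. A process function is $\omega:\vec O\to\vec I$ with $\delta_{\vec i,\omega(\vec o)}$ a classical process (equivalently, for every $h=(h_k:I_k\to O_k)$, $\omega\circ h$ has a unique fixed point). A correlation is deterministically consistent if $p(\vec x|\vec a)=\sum_{\vec i,\vec o}\prod_kp(x_k,o_k|a_k,i_k)p(\vec i|\vec o)$ for some finite $I_k,O_k$, local interventions, and $p(\vec i|\vec o)$ a convex combination of process functions $\delta_{\vec i,\omega(\vec o)}$. *)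

From HB Require Import structures.
From mathcomp Require Import all_boot all_order all_algebra.
From mathcomp Require Import reals.
Set Implicit Arguments. Unset Strict Implicit. Unset Printing Implicit Defensive.
Import Order.TTheory GRing.Theory Num.Theory.
Local Open Scope ring_scope.

Notation bit3 := (bool * bool * bool)%type.

(* A correlation in the (3,2,2) scenario is p : bit3 -> bit3 -> R with
   p x a = p(x | a), x = (x1,x2,x3) outcomes, a = (a1,a2,a3) settings. *)

Definition p_gynin (R : realType) (p : bit3 -> bit3 -> R) : R :=
  8%:R^-1 * \sum_(a : bit3)
     (p (a.2, a.1.1, a.1.2) a + p (~~ a.2, ~~ a.1.1, ~~ a.1.2) a).

(* A local intervention p(x_k, o_k | a_k, i_k), written q a i x o,
   with binary setting a and binary outcome x. *)
Definition local_intervention (R : realType) (I O : finType)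
    (q : bool -> I -> bool -> O -> R) : Prop :=
  (forall a i x o, 0 <= q a i x o) /\
  (forall a i, \sum_(x : bool) \sum_(o : O) q a i x o = 1).

Definition process_function (I1 I2 I3 O1 O2 O3 : finType)
    (w : O1 * O2 * O3 -> I1 * I2 * I3) : Prop :=
  forall (h1 : I1 -> O1) (h2 : I2 -> O2) (h3 : I3 -> O3),
    exists! i : I1 * I2 * I3, w (h1 i.1.1, h2 i.1.2, h3 i.2) = i.

(* Deterministic consistency: p arises from some finite I_k, O_k, local
   interventions, and a process p(i|o) = sum_j lam_j [i = w_j(o)] that is a
   convex combination of (finitely many) process functions w_j. *)
Definition det_consistent (R : realType) (p : bit3 -> bit3 -> R) : Prop :=
  exists (I1 I2 I3 O1 O2 O3 : finType)
    (q1 : bool -> I1 -> bool -> O1 -> R)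
    (q2 : bool -> I2 -> bool -> O2 -> R)
    (q3 : bool -> I3 -> bool -> O3 -> R)
    (n : nat) (lam : 'I_n -> R) (w : 'I_n -> O1 * O2 * O3 -> I1 * I2 * I3),
    [/\ local_intervention q1 /\ local_intervention q2 /\ local_intervention q3,
        (forall j, 0 <= lam j) /\ \sum_(j < n) lam j = 1,
        (forall j, process_function (w j)) &
        forall x a : bit3,
          p x a = \sum_(i : I1 * I2 * I3) \sum_(o : O1 * O2 * O3)
                    q1 a.1.1 i.1.1 x.1.1 o.1.1 * q2 a.1.2 i.1.2 x.1.2 o.1.2
                    * q3 a.2 i.2 x.2 o.2
                    * \sum_(j < n) lam j * (i == w j o)%:R].

Definition p_det (R : realType) (f : bit3 -> bit3) : bit3 -> bit3 -> R :=
  fun x a => (x == f a)%:R.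

Definition gynin_strategy (a : bit3) : bit3 :=
  (~~ a.1.2 && a.2, ~~ a.2 && a.1.1, ~~ a.1.1 && a.1.2).

From HB Require Import structures.
From mathcomp Require Import all_boot all_order all_algebra.
From mathcomp Require Import reals ring.
Set Implicit Arguments. Unset Strict Implicit. Unset Printing Implicit Defensive.
Import Order.TTheory GRing.Theory Num.Theory.

(* Every local intervention is a convex mixture of deterministic ones, (a_k, i_k) |-> (x_k, o_k),
   and p_gynin is linear, so it suffices to bound p_gynin for deterministic interventions and a
   single process function w.  Then the unique fixed point i(a) of w yields a deterministic
   strategy x(a).  The input i_k does not depend on a_k: otherwise choosing a_k so as to contradict
   that dependence would leave no consistent fixed point.  Hence x inherits from w that every way
   of choosing each a_k from the two outcomes x_k(a_k = 0), x_k(a_k = 1) has exactly one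
   consistent setting, and a verified exhaustive search shows that already twelve such choices
   force x to lose at least three of the eight settings.  The bound 5/8 is attained by
   w := gynin_strategy when every party outputs its input and sends out its setting. *)

Definition settings : seq bit3 :=
  [:: (false, false, false); (false, false, true); (false, true, false); (false, true, true);
      (true, false, false); (true, false, true); (true, true, false); (true, true, true)].

Lemma mem_settings (a : bit3) : a \in settings.
Proof. by case: a => [[[] []] []]. Qed.

Lemma big_settings (T : Type) (idx : T) (op : Monoid.com_law idx) (F : bit3 -> T) :
  \big[op/idx]_(a : bit3) F a = \big[op/idx]_(a <- settings) F a.
Proof.
apply: perm_big; apply: uniq_perm => //; first exact: index_enum_uniq.
by move=> a; rewrite mem_index_enum mem_settings.
Qed.

Lemma count_settings (P : pred bit3) : count P settings = #|P|.
Proof.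
rewrite cardE /enum_mem size_filter; apply/permP.
by apply: uniq_perm => //; [exact: index_enum_uniq | move=> a; rewrite mem_index_enum mem_settings].
Qed.

Lemma unique_settingP (P : pred bit3) :
  reflect (exists! a, P a) (count P settings == 1).
Proof.
rewrite count_settings; apply: (iffP card1P) => [[a Pa]|[a [Pa uniqP]]].
  exists a; split=> [|b]; first by have := Pa a; rewrite inE eqxx.
  by move=> Pb; apply/esym/eqP; rewrite -[b == a]/(b \in pred1 a) -Pa.
by exists a => b; rewrite inE; apply/idP/eqP => [/uniqP|->].
Qed.

Definition wins (a x : bit3) : bool :=
  (x == (a.2, a.1.1, a.1.2)) || (x == (~~ a.2, ~~ a.1.1, ~~ a.1.2)).

Definition win_count (x : bit3 -> bit3) : nat := count (fun a => wins a (x a)) settings.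

(* A wiring lets party k choose its setting as a function of its outcomes for the settings
   false and true. *)
Definition wiring : Type :=
  ((bool -> bool -> bool) * (bool -> bool -> bool) * (bool -> bool -> bool))%type.

Definition wired_setting (x : bit3 -> bit3) (f : wiring) (a : bit3) : bool :=
  [&& a.1.1 == f.1.1 (x (false, a.1.2, a.2)).1.1 (x (true, a.1.2, a.2)).1.1,
      a.1.2 == f.1.2 (x (a.1.1, false, a.2)).1.2 (x (a.1.1, true, a.2)).1.2 &
      a.2 == f.2 (x (a.1.1, a.1.2, false)).2 (x (a.1.1, a.1.2, true)).2].

Definition wiring_consistent (x : bit3 -> bit3) : Prop :=
  forall f : wiring, exists! a, wired_setting x f a.

Lemma eq_wiring_consistent (x y : bit3 -> bit3) :
  x =1 y -> wiring_consistent x -> wiring_consistent y.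
Proof.
move=> eq_xy consistent_x f; have [a [wired_a uniq_a]] := consistent_x f.
have eq_wired b : wired_setting x f b = wired_setting y f b by rewrite /wired_setting !eq_xy.
by exists a; split=> [|b]; rewrite -eq_wired //; apply: uniq_a.
Qed.

(* Selected by an external search: together they already refute every strategy that wins six
   settings. *)
Definition test_wirings : seq wiring :=
  [:: (fun u v => ~~ v, fun u v => ~~ u, fun u v => ~~ u);
      (fun u v => v, fun u v => u, fun u v => u);
      (fun u v => u == v, fun u v => u != v, fun u v => u != v);
      (fun u v => ~~ u, fun u v => v, fun u v => ~~ v);
      (fun u v => u, fun u v => ~~ v, fun u v => v);
      (fun u v => u != v, fun u v => u != v, fun u v => ~~ u);
      (fun u v => u != v, fun u v => v, fun u v => u != v);
      (fun u v => u, fun u v => u != v, fun u v => u == v);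
      (fun u v => ~~ u, fun u v => ~~ u, fun u v => u && ~~ v);
      (fun u v => ~~ v, fun u v => v, fun u v => u && v);
      (fun u v => v, fun u v => u && ~~ v, fun u v => v);
      (fun u v => ~~ u && v, fun u v => ~~ u && v, fun u v => false)].

Definition strategy_of (s : seq bit3) (a : bit3) : bit3 :=
  nth a s (4 * a.1.1 + 2 * a.1.2 + a.2).

Lemma strategy_of_settings (x : bit3 -> bit3) : strategy_of (map x settings) =1 x.
Proof. by case=> [[[] []] []]. Qed.

Definition losses (s : seq bit3) : nat :=
  let d := (false, false, false) in
  count (fun i => ~~ wins (nth d settings i) (nth d s i)) (iota 0 (size s)).

Lemma losses_catl (s t : seq bit3) : losses s <= losses (s ++ t).
Proof.
rewrite /losses size_cat iotaD count_cat; apply: leq_trans (leq_addr _ _).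
by apply/eq_leq/eq_in_count => i; rewrite mem_iota add0n nth_cat => /= ->.
Qed.

Lemma win_count_losses (x : bit3 -> bit3) : win_count x + losses (map x settings) = 8.
Proof. by rewrite -[8]/(size settings) -(count_predC (fun a => wins a (x a))). Qed.

(* Stated with [find] rather than [has]: [vm_compute] is call-by-value, so [has] would evaluate
   every wiring even after a violation is found. *)
Definition violates_test_wiring (x : bit3 -> bit3) : bool :=
  find (fun f => count (wired_setting x f) settings != 1) test_wirings < size test_wirings.

Lemma violates_test_wiringP (x : bit3 -> bit3) :
  violates_test_wiring x -> ~ wiring_consistent x.
Proof.
pose f0 : wiring := (fun _ _ => false, fun _ _ => false, fun _ _ => false).
rewrite /violates_test_wiring -has_find => /(nth_find f0) /negP not_unique consistent.
exact/not_unique/unique_settingP.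
Qed.

(* For the same reason the pruning test is an [if] and not a [||]. *)
Fixpoint refuted (k : nat) (pre : seq bit3) : bool :=
  if 2 < losses pre then true else
  if k is k'.+1 then all (fun y => refuted k' (rcons pre y)) settings
  else violates_test_wiring (strategy_of pre).

Lemma refuted_sound k pre suf : size suf = k -> refuted k pre ->
  wiring_consistent (strategy_of (pre ++ suf)) -> 2 < losses (pre ++ suf).
Proof.
elim: k pre suf => [|k IHk] pre suf size_suf;
  (case/orP => [many_losses _|]; first exact: leq_trans many_losses (losses_catl _ _)).
  by move: size_suf => /size0nil ->; rewrite cats0 => /violates_test_wiringP.
case: suf size_suf => [//|y suf] [size_suf] /allP refuted_next.
have refuted_y := refuted_next y (mem_settings y).
by rewrite -cat_rcons; apply: IHk.
Qed.

Lemma refuted_all : refuted 8 [::].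
Proof. vm_cast_no_check (erefl true). Qed.

Lemma win_count_le5 (x : bit3 -> bit3) : wiring_consistent x -> win_count x <= 5.
Proof.
move=> /(eq_wiring_consistent (fsym (strategy_of_settings x))) consistent.
have := refuted_sound (size_map x settings) refuted_all consistent.
by rewrite -(leq_add2l (win_count x)) win_count_losses addn3 ltnS.
Qed.

Local Open Scope ring_scope.

Lemma sum_mul3 (R : pzSemiRingType) (A B C : finType) (f : A -> R) (g : B -> R) (h : C -> R) :
  (\sum_a f a) * (\sum_b g b) * (\sum_c h c) = \sum_(t : A * B * C) f t.1.1 * g t.1.2 * h t.2.
Proof. by rewrite big_distrlr pair_bigA big_distrlr pair_bigA. Qed.

Section DeterministicInterventions.
Variables (R : realType) (I O : finType).

Definition det_intervention (F : bool * I -> bool * O) : bool -> I -> bool -> O -> R :=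
  fun a i x o => (F (a, i) == (x, o))%:R.

Lemma det_intervention_local (F : bool * I -> bool * O) :
  local_intervention (det_intervention F).
Proof.
split=> [a i x o|a i]; first exact: ler0n.
rewrite /det_intervention pair_bigA (bigD1 (F (a, i))) //= -surjective_pairing eqxx.
by rewrite big1 ?addr0 // => y; rewrite -surjective_pairing eq_sym => /negbTE ->.
Qed.

Variable q : bool -> I -> bool -> O -> R.
Hypothesis local_q : local_intervention q.

Definition det_weight (F : {ffun bool * I -> bool * O}) : R :=
  \prod_(t : bool * I) q t.1 t.2 (F t).1 (F t).2.

Lemma det_weight_ge0 F : 0 <= det_weight F.
Proof. by apply: prodr_ge0 => t _; case: local_q. Qed.

Lemma intervention_sum1 (t : bool * I) : \sum_(y : bool * O) q t.1 t.2 y.1 y.2 = 1.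
Proof. by case: local_q => _ /(_ t.1 t.2) <-; rewrite pair_bigA. Qed.

Lemma sum_det_weight : \sum_F det_weight F = 1.
Proof.
rewrite /det_weight -(bigA_distr_bigA (fun t (y : bool * O) => q t.1 t.2 y.1 y.2)).
by apply: big1 => t _; apply: intervention_sum1.
Qed.

(* det_weight F is the probability that answering every input independently with q reproduces
   F; summing it over the F that answer (a, i) by (x, o) leaves q a i x o. *)
Lemma intervention_det_mixture a i x o :
  q a i x o = \sum_F det_weight F * det_intervention F a i x o.
Proof.
pose G (t : bool * I) (y : bool * O) :=
  q t.1 t.2 y.1 y.2 * (if t == (a, i) then (y == (x, o))%:R else 1).
have -> : \sum_F det_weight F * det_intervention F a i x o =
          \sum_(F : {ffun bool * I -> bool * O}) \prod_t G t (F t).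
  apply: eq_bigr => F _; rewrite /det_weight /det_intervention /G.
  by rewrite big_split /= -big_mkcond big_pred1_eq.
rewrite -(bigA_distr_bigA G) (bigD1 (a, i)) //= [X in _ * X]big1 ?mulr1
  => [|t /negbTE t_ne].
  rewrite (bigD1 (x, o)) //= /G !eqxx mulr1 big1 ?addr0 // => y /negbTE y_ne.
  by rewrite y_ne mulr0.
by under eq_bigr do rewrite /G t_ne mulr1; apply: intervention_sum1.
Qed.

End DeterministicInterventions.

Section ProcessCorrelation.
Variables (R : realType) (I1 I2 I3 O1 O2 O3 : finType).
Local Notation intervention I O := (bool -> I -> bool -> O -> R).

Definition process_correlation
    (q1 : intervention I1 O1) (q2 : intervention I2 O2) (q3 : intervention I3 O3)
    (P : I1 * I2 * I3 -> O1 * O2 * O3 -> R) (x a : bit3) : R :=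
  \sum_(i : I1 * I2 * I3) \sum_(o : O1 * O2 * O3)
    q1 a.1.1 i.1.1 x.1.1 o.1.1 * q2 a.1.2 i.1.2 x.1.2 o.1.2 * q3 a.2 i.2 x.2 o.2 * P i o.

Definition delta_process (w : O1 * O2 * O3 -> I1 * I2 * I3) i o : R := (i == w o)%:R.

Lemma process_correlation_mixture (K : finType) (mu : K -> R)
    (P : K -> I1 * I2 * I3 -> O1 * O2 * O3 -> R)
    (q1 : intervention I1 O1) (q2 : intervention I2 O2) (q3 : intervention I3 O3) x a :
  process_correlation q1 q2 q3 (fun i o => \sum_k mu k * P k i o) x a =
  \sum_k mu k * process_correlation q1 q2 q3 (P k) x a.
Proof.
rewrite /process_correlation.
under eq_bigr => i _ do under eq_bigr => o _ do rewrite mulr_sumr.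
under eq_bigr => i _ do rewrite exchange_big.
rewrite exchange_big; apply: eq_bigr => k _; rewrite mulr_sumr; apply: eq_bigr => i _.
by rewrite mulr_sumr; apply: eq_bigr => o _; rewrite mulrCA.
Qed.

Lemma process_correlation_det_mixture
    (q1 : intervention I1 O1) (q2 : intervention I2 O2) (q3 : intervention I3 O3) P x a :
  local_intervention q1 -> local_intervention q2 -> local_intervention q3 ->
  process_correlation q1 q2 q3 P x a =
  \sum_(F : {ffun bool * I1 -> bool * O1} * {ffun bool * I2 -> bool * O2}
              * {ffun bool * I3 -> bool * O3})
    det_weight q1 F.1.1 * det_weight q2 F.1.2 * det_weight q3 F.2 *
    process_correlation (det_intervention R F.1.1) (det_intervention R F.1.2)
      (det_intervention R F.2) P x a.
Proof.
move=> local_q1 local_q2 local_q3; rewrite /process_correlation.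
under eq_bigr => i _ do under eq_bigr => o _ do
  rewrite (intervention_det_mixture local_q1) (intervention_det_mixture local_q2)
          (intervention_det_mixture local_q3) sum_mul3 mulr_suml.
under eq_bigr => i _ do rewrite exchange_big.
rewrite exchange_big; apply: eq_bigr => F _; rewrite mulr_sumr; apply: eq_bigr => i _.
by rewrite mulr_sumr; apply: eq_bigr => o _; ring.
Qed.

End ProcessCorrelation.

Section InducedStrategy.
Variables (I1 I2 I3 O1 O2 O3 : finType) (w : O1 * O2 * O3 -> I1 * I2 * I3).
Hypothesis process_w : process_function w.
Variables (F1 : bool * I1 -> bool * O1) (F2 : bool * I2 -> bool * O2)
  (F3 : bool * I3 -> bool * O3).

Definition response (a : bit3) (i : I1 * I2 * I3) : O1 * O2 * O3 :=
  ((F1 (a.1.1, i.1.1)).2, (F2 (a.1.2, i.1.2)).2, (F3 (a.2, i.2)).2).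

Definition outcome (a : bit3) (i : I1 * I2 * I3) : bit3 :=
  ((F1 (a.1.1, i.1.1)).1, (F2 (a.1.2, i.1.2)).1, (F3 (a.2, i.2)).1).

Lemma response_fixpoint a : exists! i, w (response a i) = i.
Proof.
exact: (process_w (fun i1 => (F1 (a.1.1, i1)).2) (fun i2 => (F2 (a.1.2, i2)).2)
                  (fun i3 => (F3 (a.2, i3)).2)).
Qed.

Lemma exists_fixed_input a : exists i, w (response a i) == i.
Proof. by have [i [/eqP fixed_i _]] := response_fixpoint a; exists i. Qed.

Definition fixed_input a : I1 * I2 * I3 := xchoose (exists_fixed_input a).

Lemma fixed_inputP a : w (response a (fixed_input a)) = fixed_input a.
Proof. exact/eqP/(xchooseP (exists_fixed_input a)). Qed.

Lemma fixed_input_unique a i : w (response a i) = i -> i = fixed_input a.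
Proof.
have [i0 [_ uniq_i0]] := response_fixpoint a.
by move=> /uniq_i0 <-; apply/uniq_i0/fixed_inputP.
Qed.

Lemma setting_fixpoint_unique (s1 : I1 -> bool) (s2 : I2 -> bool) (s3 : I3 -> bool) :
  let s i := (s1 i.1.1, s2 i.1.2, s3 i.2) in exists! a : bit3, a = s (fixed_input a).
Proof.
move=> s; have [i0 [fixed_i0 uniq_i0]] := process_w (fun i1 => (F1 (s1 i1, i1)).2)
  (fun i2 => (F2 (s2 i2, i2)).2) (fun i3 => (F3 (s3 i3, i3)).2).
have fixed_s a : a = s (fixed_input a) -> fixed_input a = i0.
  move=> a_fixed; apply/esym/uniq_i0.
  by rewrite -[w _]/(w (response (s (fixed_input a)) (fixed_input a))) -a_fixed fixed_inputP.
exists (s i0); split=> [|a a_fixed].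
  by rewrite -(fixed_input_unique (a := s i0) fixed_i0).
by rewrite {1}a_fixed (fixed_s a a_fixed).
Qed.

Lemma fixed_input1_indep a2 a3 b b' :
  (fixed_input (b, a2, a3)).1.1 = (fixed_input (b', a2, a3)).1.1.
Proof.
suff key : (fixed_input (false, a2, a3)).1.1 = (fixed_input (true, a2, a3)).1.1.
  by case: b; case: b'.
apply/eqP/negPn/negP => fixed_false.
set c := (fixed_input (true, a2, a3)).1.1 in fixed_false.
have [[[d a2'] a3'] [[fixed_d eq_a2 eq_a3] _]] :=
  setting_fixpoint_unique (fun i => i != c) (fun _ => a2) (fun _ => a3).
by subst a2' a3'; case: d fixed_d => /=; rewrite ?eqxx ?fixed_false.
Qed.

Lemma fixed_input2_indep a1 a3 b b' :
  (fixed_input (a1, b, a3)).1.2 = (fixed_input (a1, b', a3)).1.2.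
Proof.
suff key : (fixed_input (a1, false, a3)).1.2 = (fixed_input (a1, true, a3)).1.2.
  by case: b; case: b'.
apply/eqP/negPn/negP => fixed_false.
set c := (fixed_input (a1, true, a3)).1.2 in fixed_false.
have [[[a1' d] a3'] [[eq_a1 fixed_d eq_a3] _]] :=
  setting_fixpoint_unique (fun _ => a1) (fun i => i != c) (fun _ => a3).
by subst a1' a3'; case: d fixed_d => /=; rewrite ?eqxx ?fixed_false.
Qed.

Lemma fixed_input3_indep a1 a2 b b' :
  (fixed_input (a1, a2, b)).2 = (fixed_input (a1, a2, b')).2.
Proof.
suff key : (fixed_input (a1, a2, false)).2 = (fixed_input (a1, a2, true)).2.
  by case: b; case: b'.
apply/eqP/negPn/negP => fixed_false.
set c := (fixed_input (a1, a2, true)).2 in fixed_false.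
have [[[a1' a2'] d] [[eq_a1 eq_a2 fixed_d] _]] :=
  setting_fixpoint_unique (fun _ => a1) (fun _ => a2) (fun i => i != c).
by subst a1' a2'; case: d fixed_d => /=; rewrite ?eqxx ?fixed_false.
Qed.

Definition induced_strategy (a : bit3) : bit3 := outcome a (fixed_input a).

Lemma process_correlation_det (R : realType) x a :
  process_correlation (det_intervention R F1) (det_intervention R F2) (det_intervention R F3)
    (delta_process R w) x a = p_det R induced_strategy x a.
Proof.
have eq_trace i o :
    (F1 (a.1.1, i.1.1) == (x.1.1, o.1.1)) && (F2 (a.1.2, i.1.2) == (x.1.2, o.1.2))
      && (F3 (a.2, i.2) == (x.2, o.2)) && (i == w o) =
    (o == response a i) && (outcome a i == x) && (i == w (response a i)).
  case: i o x => [[i1 i2] i3] [[o1 o2] o3] [[x1 x2] x3]; rewrite /response /outcome /=.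
  case: (F1 _) (F2 _) (F3 _) => [y1 p1] [y2 p2] [y3 p3].
  apply/idP/idP.
    by case/andP => /andP[/andP[/eqP[-> ->] /eqP[-> ->]] /eqP[-> ->]] ->; rewrite !eqxx.
  by case/andP => /andP[/eqP[-> -> ->] /eqP[-> -> ->]] ->; rewrite !eqxx.
rewrite /process_correlation /p_det /delta_process /det_intervention.
under eq_bigr => i _.
  under eq_bigr => o _ do rewrite -!natrM !mulnb eq_trace -andbA.
  rewrite (bigD1 (response a i)) //= eqxx big1 ?addr0 => [|o /negbTE -> //]; over.
rewrite (bigD1 (fixed_input a)) //= fixed_inputP eqxx andbT eq_sym big1 ?addr0 // => i.
move=> not_fixed; case: (i =P _) => [fixed|]; last by rewrite andbF.
by rewrite -(fixed_input_unique (esym fixed)) eqxx in not_fixed.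
Qed.

Lemma induced_strategy_consistent : wiring_consistent induced_strategy.
Proof.
move=> [[f1 f2] f3].
pose s1 i := f1 (F1 (false, i)).1 (F1 (true, i)).1.
pose s2 i := f2 (F2 (false, i)).1 (F2 (true, i)).1.
pose s3 i := f3 (F3 (false, i)).1 (F3 (true, i)).1.
have [a [fixed_a uniq_a]] := setting_fixpoint_unique s1 s2 s3.
have wiredE b : wired_setting induced_strategy (f1, f2, f3) b =
                (b == (s1 (fixed_input b).1.1, s2 (fixed_input b).1.2, s3 (fixed_input b).2)).
  case: b => [[b1 b2] b3]; rewrite /wired_setting /induced_strategy /outcome /= !xpair_eqE.
  rewrite !(fixed_input1_indep _ _ false b1) !(fixed_input1_indep _ _ true b1).
  rewrite !(fixed_input2_indep _ _ false b2) !(fixed_input2_indep _ _ true b2).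
  by rewrite !(fixed_input3_indep _ _ false b3) !(fixed_input3_indep _ _ true b3) andbA.
by exists a; split=> [|b]; rewrite wiredE; [apply/eqP | move/eqP/uniq_a].
Qed.

End InducedStrategy.

Section GyninBound.
Variable R : realType.

Lemma p_gynin_det (f : bit3 -> bit3) : p_gynin (p_det R f) = (win_count f)%:R / 8%:R.
Proof.
have wins_split a y : (y == (a.2, a.1.1, a.1.2))%:R + (y == (~~ a.2, ~~ a.1.1, ~~ a.1.2))%:R
                      = (wins a y)%:R :> R.
  by rewrite -natrD; case: a y => [[[] []] []] [[[] []] []].
rewrite /p_gynin /p_det mulrC; congr (_ * _).
under eq_bigr do rewrite !(eq_sym _ (f _)) wins_split.
rewrite -natr_sum big_settings /win_count -sum1_count [in RHS]big_mkcond.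
by congr _%:R; apply: eq_bigr => a _; case: wins.
Qed.

Lemma p_gynin_mixture (K : finType) (mu : K -> R) (pk : K -> bit3 -> bit3 -> R)
    (p : bit3 -> bit3 -> R) (c : R) :
  (forall k, 0 <= mu k) -> \sum_k mu k = 1 ->
  (forall x a, p x a = \sum_k mu k * pk k x a) ->
  (forall k, p_gynin (pk k) <= c) -> p_gynin p <= c.
Proof.
move=> mu_ge0 mu_sum1 p_mix pk_le.
have -> : p_gynin p = \sum_k mu k * p_gynin (pk k).
  rewrite /p_gynin; under eq_bigr do rewrite !p_mix -big_split.
  rewrite exchange_big mulr_sumr; apply: eq_bigr => k _.
  rewrite mulrCA; congr (_ * _).
  by rewrite mulr_sumr; apply: eq_bigr => a _; rewrite mulrDr.
rewrite -[c]mul1r -mu_sum1 mulr_suml; apply: ler_sum => k _.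
exact: ler_wpM2l.
Qed.

Lemma p_gynin_process_le (I1 I2 I3 O1 O2 O3 : finType)
    (q1 : bool -> I1 -> bool -> O1 -> R) (q2 : bool -> I2 -> bool -> O2 -> R)
    (q3 : bool -> I3 -> bool -> O3 -> R) (w : O1 * O2 * O3 -> I1 * I2 * I3) :
  local_intervention q1 -> local_intervention q2 -> local_intervention q3 ->
  process_function w ->
  p_gynin (process_correlation q1 q2 q3 (delta_process R w)) <= 5%:R / 8%:R.
Proof.
move=> local_q1 local_q2 local_q3 process_w.
apply: (p_gynin_mixture
  (mu := fun F => det_weight q1 F.1.1 * det_weight q2 F.1.2 * det_weight q3 F.2)
  (pk := fun F => p_det R (induced_strategy process_w F.1.1 F.1.2 F.2))).
- by move=> F; rewrite !mulr_ge0 ?det_weight_ge0.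
- by rewrite -sum_mul3 !sum_det_weight ?mul1r.
- move=> x a; rewrite process_correlation_det_mixture //.
  by apply: eq_bigr => F _; rewrite process_correlation_det.
move=> F; rewrite p_gynin_det ler_wpM2r ?invr_ge0 ?ler0n // ler_nat.
exact/win_count_le5/induced_strategy_consistent.
Qed.

End GyninBound.

Lemma det_consistent_process_function (R : realType) (I1 I2 I3 O1 O2 O3 : finType)
    (q1 : bool -> I1 -> bool -> O1 -> R) (q2 : bool -> I2 -> bool -> O2 -> R)
    (q3 : bool -> I3 -> bool -> O3 -> R) (w : O1 * O2 * O3 -> I1 * I2 * I3)
    (p : bit3 -> bit3 -> R) :
  local_intervention q1 -> local_intervention q2 -> local_intervention q3 ->
  process_function w ->
  (forall x a, p x a = process_correlation q1 q2 q3 (delta_process R w) x a) ->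
  det_consistent p.
Proof.
move=> local_q1 local_q2 local_q3 process_w p_eq.
exists I1, I2, I3, O1, O2, O3, q1, q2, q3, 1%N, (fun=> 1), (fun=> w); split=> //.
- by split; [move=> _; apply: ler01 | rewrite big_ord1].
move=> x a; rewrite p_eq; apply: eq_bigr => i _; apply: eq_bigr => o _.
by rewrite big_ord1 mul1r.
Qed.

Lemma process_function_gynin : process_function gynin_strategy.
Proof.
move=> h1 h2 h3.
suff [i [/eqP fixed_i uniq_i]] : exists! i, gynin_strategy (h1 i.1.1, h2 i.1.2, h3 i.2) == i.
  by exists i; split=> // j /eqP /uniq_i.
apply/unique_settingP; rewrite /=.
by case: (h1 false); case: (h1 true); case: (h2 false); case: (h2 true);
   case: (h3 false); case: (h3 true).
Qed.

Definition relay (t : bool * bool) : bool * bool := (t.2, t.1).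

Lemma induced_strategy_relay :
  induced_strategy process_function_gynin relay relay relay =1 gynin_strategy.
Proof.
move=> a; rewrite /induced_strategy /outcome.
rewrite -(@fixed_input_unique _ _ _ _ _ _ _ process_function_gynin relay relay relay a
                                 (gynin_strategy a)).
  by case: (gynin_strategy a) => [[]].
by case: a => [[]].
Qed.

Theorem mainTheorem9 (R : realType) :
  (forall p : bit3 -> bit3 -> R, det_consistent p -> p_gynin p <= 5%:R / 8%:R) /\
  det_consistent (p_det R gynin_strategy) /\
  p_gynin (p_det R gynin_strategy) = 5%:R / 8%:R.
Proof.
split.
  move=> p [I1 [I2 [I3 [O1 [O2 [O3 [q1 [q2 [q3 [n [lam [w]]]]]]]]]]]].
  case=> [[local_q1 [local_q2 local_q3]] [lam_ge0 lam_sum1] process_w p_eq].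
  apply: (p_gynin_mixture
    (pk := fun j => process_correlation q1 q2 q3 (delta_process R (w j)))) => // [x a|j].
    by rewrite p_eq -process_correlation_mixture.
  exact: p_gynin_process_le.
split; last by rewrite p_gynin_det.
have local_relay := det_intervention_local R relay.
apply: (det_consistent_process_function local_relay local_relay local_relay
          process_function_gynin).
move=> x a; rewrite (process_correlation_det process_function_gynin).
by rewrite /p_det induced_strategy_relay.
Qed.
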